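(* Let $m\in\{1,2\}$, $\gamma\in(1,2]$ and $z\in(z_g,z_M]$. Then the continuation to the right, $C:[V_6,0)\to(0,\infty)$, of the local real-analytic solution through $P_6$ satisfies $C(V)<\sqrt{-V}$ for all $V\in[V_6,0)$; in particular $C(V)\to0$ as $V\to0^-$.
   Context: Fix $m\in\{1,2\}$. For $z>0$ put $\lambda=1+m\gamma z$, $a_1=1+\frac{m(\gamma-1)}{2}$, $a_2=\frac{m(\gamma-1)+mz\gamma(\gamma-3)}{2}$, $a_3=\frac{mz\gamma(\gamma-1)}{2}$, $G(V,C;\gamma,z)=C^2[(m+1)V+2mz]-V(1+V)(\lambda+V)$, $F(V,C;\gamma,z)=C\{C^2[1+\frac{mz}{1+V}]-a_1(1+V)^2+a_2(1+V)-a_3\}$; ODE $\frac{dC}{dV}=\frac FG$. $z_M=(\sqrt\gamma+\sqrt2)^{-2}$; $w(z)=\sqrt{1-2(\gamma+2)z+(\gamma-2)^2z^2}$, $V_6=\frac{-1+(\gamma-2)z-w}{2}$, $C_6=1+V_6$, $P_6=(V_6,C_6)$. The local solution is the real-analytic solution near $V_6$ with $C(V_6)=C_6$ and $C'(V_6)$ equal to the unique negative root of $-G_Cc^2+(F_C-G_V)c+F_V=0$ (partials at $P_6$); it extends as a positive decreasing solution on $[V_6,0)$. $z_g$: value of $z$ with $V_6(z)=\frac{-2(1+m\gamma z)}{\gamma+1+m(\gamma-1)}$ (explicitly $\frac{\sqrt{\gamma^2+(\gamma-1)^2}-\gamma}{\gamma(\gamma-1)}$ for $m=1$, $\frac{\sqrt{(2\gamma^2-\gamma+1)^2+2\gamma(\gamma-1)[4\gamma(\gamma-1)+8/3]}-(2\gamma^2-\gamma+1)}{\gamma[4\gamma(\gamma-1)+8/3]}$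 for $m=2$). *)

From Stdlib Require Import Reals Lra.
From Coquelicot Require Import Coquelicot.
Open Scope R_scope.

Definition lam (m : nat) (g z : R) : R := 1 + INR m * g * z.
Definition a1 (m : nat) (g : R) : R := 1 + INR m * (g - 1) / 2.
Definition a2 (m : nat) (g z : R) : R :=
  (INR m * (g - 1) + INR m * z * g * (g - 3)) / 2.
Definition a3 (m : nat) (g z : R) : R := INR m * z * g * (g - 1) / 2.

Definition Gf (m : nat) (g z V C : R) : R :=
  C ^ 2 * ((INR m + 1) * V + 2 * INR m * z) - V * (1 + V) * (lam m g z + V).

Definition Ff (m : nat) (g z V C : R) : R :=
  C * (C ^ 2 * (1 + INR m * z / (1 + V)) - a1 m g * (1 + V) ^ 2
       + a2 m g z * (1 + V) - a3 m g z).

Definition zM (g : R) : R := / (sqrt g + sqrt 2) ^ 2.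

Definition wf (g z : R) : R := sqrt (1 - 2 * (g + 2) * z + (g - 2) ^ 2 * z ^ 2).
Definition V6 (g z : R) : R := (-1 + (g - 2) * z - wf g z) / 2.
Definition C6 (g z : R) : R := 1 + V6 g z.

Definition zg (m : nat) (g : R) : R :=
  match m with
  | 1%nat => (sqrt (g ^ 2 + (g - 1) ^ 2) - g) / (g * (g - 1))
  | _ => (sqrt ((2 * g ^ 2 - g + 1) ^ 2
                + 2 * g * (g - 1) * (4 * g * (g - 1) + 8 / 3))
          - (2 * g ^ 2 - g + 1)) / (g * (4 * g * (g - 1) + 8 / 3))
  end.

Definition GV6 (m : nat) (g z : R) : R :=
  Derive (fun V => Gf m g z V (C6 g z)) (V6 g z).
Definition GC6 (m : nat) (g z : R) : R :=
  Derive (fun C => Gf m g z (V6 g z) C) (C6 g z).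
Definition FV6 (m : nat) (g z : R) : R :=
  Derive (fun V => Ff m g z V (C6 g z)) (V6 g z).
Definition FC6 (m : nat) (g z : R) : R :=
  Derive (fun C => Ff m g z (V6 g z) C) (C6 g z).

Definition slope_eq (m : nat) (g z c : R) : Prop :=
  - GC6 m g z * c ^ 2 + (FC6 m g z - GV6 m g z) * c + FV6 m g z = 0.

Definition local_solution (m : nat) (g z : R) (C : R -> R) : Prop :=
  C (V6 g z) = C6 g z /\
  (exists r : R, 0 < r /\ exists a : nat -> R,
     (forall V, Rabs (V - V6 g z) < r -> is_pseries a (V - V6 g z) (C V)) /\
     (forall V, Rabs (V - V6 g z) < r ->
        Gf m g z V (C V) * Derive C V = Ff m g z V (C V))) /\
  ex_derive C (V6 g z) /\ Derive C (V6 g z) < 0 /\ slope_eq m g z (Derive C (V6 g z)).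

Definition right_continuation (m : nat) (g z : R) (C : R -> R) : Prop :=
  local_solution m g z C /\
  (forall V, V6 g z <= V < 0 -> 0 < C V) /\
  (forall V1 V2, V6 g z <= V1 -> V1 < V2 -> V2 < 0 -> C V2 < C V1) /\
  (forall V, V6 g z < V < 0 ->
     Gf m g z V (C V) <> 0 /\
     is_derive C V (Ff m g z V (C V) / Gf m g z V (C V))).

(* Along the parabola C^2 = -V one has d(C^2 + V)/dV = (2 C F + G) / G, and for
   -1/4 <= V < 0, -V <= g z and z <= 25/144 the numerator is negative while G > 0.
   At V = -C_6^2 the function C^2 + V is negative, since C decreases from C(V_6) = C_6,
   so it can never reach 0 on [-C_6^2, 0).  The bound -V <= g z there comes from
   C_6^2 <= g z: the sonic point C_6 is the smaller root of c^2 - (1 - (2 - g) z) c + g z,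
   which is real because z <= z_M.  On [V_6, -C_6^2) simply C <= C_6 < sqrt(-V). *)
From Stdlib Require Import Reals Lra Psatz Classical.
From Coquelicot Require Import Coquelicot.
Open Scope R_scope.

Lemma lt_sqrt_of_sq_lt (a x : R) : 0 <= a -> a ^ 2 < x -> a < sqrt x.
Proof. intros Ha Hx. rewrite <- (sqrt_pow2 a Ha). apply sqrt_lt_1_alt. nra. Qed.

Lemma le_sqrt_of_sq_le (a x : R) : 0 <= a -> a ^ 2 <= x -> a <= sqrt x.
Proof. intros Ha Hx. rewrite <- (sqrt_pow2 a Ha). now apply sqrt_le_1_alt. Qed.

Lemma zg_nonneg (m : nat) (g : R) : (m = 1%nat \/ m = 2%nat) -> 1 < g <= 2 -> 0 <= zg m g.
Proof.
  intros [-> | ->] Hg; unfold zg; apply Rlt_le.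
  - assert (g < sqrt (g ^ 2 + (g - 1) ^ 2)) by (apply lt_sqrt_of_sq_lt; nra).
    apply Rdiv_lt_0_compat; nra.
  - set (k := 4 * g * (g - 1) + 8 / 3). assert (0 < k) by (unfold k; nra).
    assert (2 * g ^ 2 - g + 1 < sqrt ((2 * g ^ 2 - g + 1) ^ 2 + 2 * g * (g - 1) * k)).
    { apply lt_sqrt_of_sq_lt; [nra |]. assert (0 < 2 * g * (g - 1)) by nra. nra. }
    apply Rdiv_lt_0_compat; nra.
Qed.

Lemma zM_le (g : R) : 1 < g -> zM g <= 25/144.
Proof.
  intros Hg. unfold zM.
  assert (1 <= sqrt g) by (apply le_sqrt_of_sq_le; lra).
  assert (7/5 <= sqrt 2) by (apply le_sqrt_of_sq_le; lra).
  replace (25/144) with (/ (12/5) ^ 2) by field.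
  apply Rinv_le_contravar; nra.
Qed.

Lemma sonic_discriminant_nonneg (g z : R) : 1 < g -> 0 < z <= zM g ->
  0 <= 1 - 2 * (g + 2) * z + (g - 2) ^ 2 * z ^ 2.
Proof.
  intros Hg [Hz HzM]. unfold zM in HzM.
  set (t := sqrt g) in HzM. set (r := sqrt 2) in HzM.
  assert (Ht : t ^ 2 = g) by (apply pow2_sqrt; lra).
  assert (Hr : r ^ 2 = 2) by (apply pow2_sqrt; lra).
  assert (1 <= t) by (apply le_sqrt_of_sq_le; lra).
  assert (1 <= r) by (apply le_sqrt_of_sq_le; lra).
  assert (Htr : 0 < (t + r) ^ 2) by nra.
  set (u := z * (t + r) ^ 2).
  assert (Hu : u <= 1).
  { unfold u. apply Rmult_le_compat_r with (r := (t + r) ^ 2) in HzM; [| lra].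
    rewrite Rinv_l in HzM; lra. }
  assert (Hu0 : 0 <= u) by (unfold u; nra).
  (* with g = t^2 and 2 = r^2 the discriminant factors through u = z (t + r)^2 *)
  assert (Hfac : (1 - 2 * (g + 2) * z + (g - 2) ^ 2 * z ^ 2) * (t + r) ^ 2
                 = (1 - u) * ((t + r) ^ 2 - (t - r) ^ 2 * u)).
  { rewrite <- Ht. replace 2 with (r ^ 2) at 2 3 by exact Hr. unfold u. ring. }
  assert (0 <= (t - r) ^ 2 * (1 - u)) by (apply Rmult_le_pos; [apply pow2_ge_0 | lra]).
  assert (0 <= (t + r) ^ 2 - (t - r) ^ 2 * u) by nra.
  assert (0 <= (1 - u) * ((t + r) ^ 2 - (t - r) ^ 2 * u)) by (apply Rmult_le_pos; lra).
  nra.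
Qed.

Lemma V6_eq (g z : R) : V6 g z = C6 g z - 1.
Proof. unfold C6. ring. Qed.

Lemma C6_bounds (g z : R) : 1 < g <= 2 -> 0 < z <= zM g ->
  0 < C6 g z <= 1/2 /\ C6 g z ^ 2 <= g * z.
Proof.
  intros Hg [Hz HzM].
  assert (z <= 25/144) by (pose proof (zM_le g ltac:(lra)); lra).
  set (A := 1 - (2 - g) * z).
  assert (HA : 1/2 < A <= 1) by (unfold A; nra).
  assert (Hw2 : wf g z ^ 2 = A ^ 2 - 4 * g * z).
  { unfold wf. rewrite pow2_sqrt by (apply sonic_discriminant_nonneg; lra). unfold A. ring. }
  assert (Hw0 : 0 <= wf g z) by apply sqrt_pos.
  replace (C6 g z) with ((A - wf g z) / 2) by (unfold C6, V6, A; field).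
  set (w := wf g z) in *.
  assert (Hgz : 0 < g * z) by nra.
  assert (w < A) by nra.
  (* the two roots (A -+ w)/2 of c^2 - A c + g z have product g z *)
  assert (Hprod : (A - w) / 2 * ((A + w) / 2) = g * z) by (field_simplify; nra).
  split; [split |]; nra.
Qed.

Lemma INR_1_or_2 (m : nat) : (m = 1%nat \/ m = 2%nat) -> INR m = 1 \/ INR m = 2.
Proof. intros [-> | ->]; [left | right]; simpl; lra. Qed.

Definition parabola_Q (m : nat) (g z s : R) : R :=
  - (INR m + 1) * s + 2 * INR m * z + (1 - s) * (lam m g z - s).

Definition parabola_P (m : nat) (g z s : R) : R :=
  (2 * s - 2 * a1 m g * (1 - s) ^ 2 + 2 * a2 m g z * (1 - s) - 2 * a3 m g z
   + parabola_Q m g z s) * (1 - s) + 2 * s * INR m * z.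

Lemma Gf_on_parabola (m : nat) (g z s C : R) :
  C ^ 2 = s -> Gf m g z (- s) C = s * parabola_Q m g z s.
Proof. intros HC. unfold Gf, parabola_Q. rewrite HC. ring. Qed.

Lemma Ff_Gf_on_parabola (m : nat) (g z s C : R) : s <> 1 -> C ^ 2 = s ->
  2 * C * Ff m g z (- s) C + Gf m g z (- s) C = s * parabola_P m g z s / (1 - s).
Proof.
  intros Hs HC. rewrite Gf_on_parabola by exact HC.
  replace (2 * C * Ff m g z (- s) C) with
    (2 * C ^ 2 * (C ^ 2 * (1 + INR m * z / (1 + - s)) - a1 m g * (1 + - s) ^ 2
       + a2 m g z * (1 + - s) - a3 m g z)) by (unfold Ff; ring).
  rewrite HC. unfold parabola_P. field. lra.
Qed.

Lemma parabola_Q_pos (m : nat) (g z s : R) : (m = 1%nat \/ m = 2%nat) -> 1 < g ->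
  0 < z -> 0 <= s <= 1/4 -> s <= g * z -> 0 < parabola_Q m g z s.
Proof.
  intros Hm Hg Hz Hs Hsz. assert (0 <= (g * z - s) * (1 - s)) by (apply Rmult_le_pos; lra).
  unfold parabola_Q, lam. destruct (INR_1_or_2 m Hm) as [-> | ->]; nra.
Qed.

Lemma parabola_P_coefficient_bounds (g s : R) : 1 <= g <= 2 -> 0 <= s <= 1/4 ->
  25/144 * ((2 - g) * (1 + g * s) * (1 - s) + 2 * s) < (1 - s) ^ 2 * (1 - g * s) /\
  25/144 * (2 * (2 - g) * (1 + g * s) * (1 - s) + 4 * s)
    < (1 + s - 2 * g * s + (2 * g - 1) * s ^ 2) * (1 - s).
Proof.
  intros Hg Hs.
  assert (0 <= (g - 1) * (2 - g)) by nra.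
  assert (0 <= s * (1/4 - s)) by nra.
  assert (0 <= s * (g - 1) * (2 - g)) by (apply Rmult_le_pos; nra).
  assert (0 <= s * s * (g - 1) * (2 - g)) by (apply Rmult_le_pos; nra).
  assert (0 <= s * (1/4 - s) * (g - 1)) by (apply Rmult_le_pos; nra).
  assert (0 <= s * (1/4 - s) * (2 - g)) by (apply Rmult_le_pos; nra).
  split; nra.
Qed.

Lemma parabola_P_neg (m : nat) (g z s : R) : (m = 1%nat \/ m = 2%nat) -> 1 < g <= 2 ->
  0 < z <= 25/144 -> 0 < s <= 1/4 -> parabola_P m g z s < 0.
Proof.
  intros Hm Hg Hz Hs.
  destruct (parabola_P_coefficient_bounds g s) as [Hb1 Hb2]; try lra.
  assert (0 <= (2 - g) * (1 + g * s) * (1 - s)) by (repeat apply Rmult_le_pos; nra).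
  unfold parabola_P, parabola_Q, a1, a2, a3, lam.
  destruct (INR_1_or_2 m Hm) as [-> | ->].
  - match goal with |- ?L < 0 => replace L with
      (- (1 - s) ^ 2 * (1 - g * s) + z * ((2 - g) * (1 + g * s) * (1 - s) + 2 * s)) by field end.
    nra.
  - match goal with |- ?L < 0 => replace L with
      (- (1 + s - 2 * g * s + (2 * g - 1) * s ^ 2) * (1 - s)
       + z * (2 * (2 - g) * (1 + g * s) * (1 - s) + 4 * s)) by field end.
    nra.
Qed.

Lemma parabola_crossing (m : nat) (g z V C : R) : (m = 1%nat \/ m = 2%nat) ->
  1 < g <= 2 -> 0 < z <= 25/144 -> - (1/4) <= V < 0 -> - V <= g * z -> C ^ 2 = - V ->
  0 < Gf m g z V C /\ 2 * C * Ff m g z V C + Gf m g z V C < 0.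
Proof.
  intros Hm Hg Hz HV HVz HC. replace V with (- (- V)) by ring.
  rewrite Ff_Gf_on_parabola, Gf_on_parabola by lra.
  pose proof (parabola_Q_pos m g z (- V) Hm ltac:(lra) ltac:(lra) ltac:(lra) HVz).
  pose proof (parabola_P_neg m g z (- V) Hm Hg Hz ltac:(lra)).
  split; [nra |].
  assert (0 < - V * - parabola_P m g z (- V) / (1 - - V)) by (apply Rdiv_lt_0_compat; nra).
  replace (- V * parabola_P m g z (- V) / (1 - - V))
    with (- (- V * - parabola_P m g z (- V) / (1 - - V))) by (field; lra).
  lra.
Qed.

Lemma locally_lt_of_continuous (h : R -> R) (x y : R) :
  continuous h x -> h x < y -> locally x (fun u => h u < y).
Proof. intros Hc Hlt. exact (Hc _ (open_lt y (h x) Hlt)). Qed.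

Lemma locally_gt_of_continuous (h : R -> R) (x y : R) :
  continuous h x -> y < h x -> locally x (fun u => y < h u).
Proof. intros Hc Hlt. exact (Hc _ (open_gt y (h x) Hlt)). Qed.

Lemma zero_approached_from_below (h : R -> R) (a b : R) :
  a < b -> h a < 0 -> 0 <= h b -> (forall x, a <= x <= b -> continuous h x) ->
  exists c, a < c <= b /\ h c = 0 /\
    forall d, 0 < d -> exists e, c - d < e < c /\ h e < 0.
Proof.
  intros Hab Ha Hb Hcont.
  set (E := fun x => a <= x <= b /\ h x < 0).
  destruct (completeness E) as [c [Hub Hlub]].
  { exists b. intros x [Hx _]. lra. }
  { exists a. split; [lra | exact Ha]. }
  assert (Hac : a <= c) by (apply Hub; split; [lra | exact Ha]).
  assert (Hcb : c <= b) by (apply Hlub; intros x [Hx _]; lra).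
  assert (Happ : forall d, 0 < d -> exists e, c - d < e <= c /\ E e).
  { intros d Hd. apply NNPP. intros Hno.
    enough (c <= c - d) by lra.
    apply Hlub. intros x Hx. apply Rnot_lt_le. intros Hlt.
    apply Hno. exists x. split; [split; [lra | now apply Hub] | exact Hx]. }
  assert (Hcont_c := Hcont c (conj Hac Hcb)).
  assert (Hle : h c <= 0).
  { apply Rnot_lt_le. intros Hpos.
    destruct (locally_gt_of_continuous h c 0 Hcont_c Hpos) as [eps Heps].
    destruct (Happ eps (cond_pos eps)) as [e [He [_ Hhe]]].
    enough (0 < h e) by lra. apply Heps.
    change (Rabs (e - c) < eps). rewrite Rabs_left1; lra. }
  assert (Hge : 0 <= h c).
  { apply Rnot_lt_le. intros Hneg.
    assert (Hcb' : c < b) by (destruct (Req_dec c b); [subst; lra | lra]).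
    destruct (locally_lt_of_continuous h c 0 Hcont_c Hneg) as [eps Heps].
    set (x := Rmin (c + eps / 2) b).
    assert (Hcx : c < x) by (apply Rmin_glb_lt; pose proof (cond_pos eps); lra).
    assert (Hxe : x <= c + eps / 2) by apply Rmin_l.
    assert (Hxb : x <= b) by apply Rmin_r.
    enough (x <= c) by lra.
    apply Hub. split; [lra |]. apply Heps.
    change (Rabs (x - c) < eps). rewrite Rabs_right; pose proof (cond_pos eps); lra. }
  exists c. split; [| split; [lra |]].
  - destruct (Req_dec a c) as [<- | Hne]; lra.
  - intros d Hd. destruct (Happ d Hd) as [e [He [_ Hhe]]].
    exists e. split; [| exact Hhe].
    destruct (Req_dec e c) as [-> |]; lra.
Qed.

Lemma derive_ge0_of_lower_left_values (h : R -> R) (c l : R) :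
  is_derive h c l ->
  (forall d, 0 < d -> exists e, c - d < e < c /\ h e < h c) -> 0 <= l.
Proof.
  intros Hd Happ. apply Rnot_lt_le. intros Hl.
  apply is_derive_Reals in Hd.
  destruct (Hd (- l / 2) ltac:(lra)) as [del Hdel].
  destruct (Happ del (cond_pos del)) as [e [[He1 He2] He3]].
  specialize (Hdel (e - c) ltac:(lra) ltac:(rewrite Rabs_left; lra)).
  replace (c + (e - c)) with e in Hdel by ring.
  assert (0 < (h e - h c) / (e - c)).
  { replace ((h e - h c) / (e - c)) with ((h c - h e) / (c - e)) by (field; lra).
    apply Rdiv_lt_0_compat; lra. }
  apply Rabs_def2 in Hdel. lra.
Qed.

Lemma lt0_of_derive_lt0_at_zeros (h h' : R -> R) (a b : R) :
  a <= b -> h a < 0 ->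
  (forall x, a <= x <= b -> is_derive h x (h' x)) ->
  (forall x, a < x <= b -> h x = 0 -> h' x < 0) ->
  h b < 0.
Proof.
  intros Hab Ha Hder Hzero. apply Rnot_le_lt. intros Hb.
  destruct (Req_dec a b) as [<- | Hne]; [lra |].
  destruct (zero_approached_from_below h a b) as [c [Hc [Hhc Happ]]]; try lra.
  { intros x Hx. apply (ex_derive_continuous (V := R_NormedModule)).
    exists (h' x). now apply Hder. }
  enough (0 <= h' c) by (specialize (Hzero c Hc Hhc); lra).
  apply (derive_ge0_of_lower_left_values h c); [apply Hder; lra |].
  rewrite Hhc. exact Happ.
Qed.

Lemma filterlim_at_left0_of_sqrt_bound (f : R -> R) (d : R) : 0 < d ->
  (forall x, - d < x < 0 -> 0 <= f x <= sqrt (- x)) ->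
  filterlim f (at_left 0) (locally 0).
Proof.
  intros Hd Hbound.
  apply (filterlim_le_le (F := at_left 0) (fun _ => 0) f (fun x => sqrt (- x)) 0).
  - exists (mkposreal d Hd). intros x Hx Hx0. apply Hbound.
    change (Rabs (x - 0) < d) in Hx. rewrite Rminus_0_r, Rabs_left in Hx; lra.
  - apply filterlim_const.
  - apply (filterlim_filter_le_1 _ (filter_le_within (F := locally 0) _)).
    replace (Finite 0) with (Finite (sqrt (- 0))) by (now rewrite Ropp_0, sqrt_0).
    apply continuous_sqrt_comp.
    apply (continuous_opp (V := R_NormedModule) (fun x => x)), continuous_id.
Qed.

Lemma is_derive_sq_plus_id (f : R -> R) (x l : R) :
  is_derive f x l -> is_derive (fun y => f y ^ 2 + y) x (2 * f x * l + 1).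
Proof.
  intros Hf.
  pose proof (is_derive_plus _ _ x _ _ (is_derive_pow f 2 x l Hf) (is_derive_id x)) as H.
  replace (2 * f x * l + 1) with (plus (INR 2 * l * f x ^ Init.Nat.pred 2) one); [exact H |].
  simpl. unfold plus, one; simpl. ring.
Qed.

Section RightContinuation.

Variables (m : nat) (g z : R) (C : R -> R).
Hypothesis Hm : m = 1%nat \/ m = 2%nat.
Hypothesis Hg : 1 < g <= 2.
Hypothesis Hz : 0 < z <= zM g.
Hypothesis HC : right_continuation m g z C.

Lemma right_continuation_sq_plus_id_lt0 (V : R) :
  - C6 g z ^ 2 <= V < 0 -> C V ^ 2 + V < 0.
Proof.
  destruct HC as [[HC6 _] [Hpos [Hdec Hder]]].
  rewrite V6_eq in HC6, Hpos, Hdec, Hder.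
  destruct (C6_bounds g z Hg Hz) as [Hc Hcgz].
  assert (Hz25 : z <= 25/144) by (pose proof (zM_le g ltac:(lra)); lra).
  set (c := C6 g z) in *. intros HV.
  apply (lt0_of_derive_lt0_at_zeros (fun x => C x ^ 2 + x)
           (fun x => 2 * C x * (Ff m g z x (C x) / Gf m g z x (C x)) + 1) (- c ^ 2) V);
    [lra | | |].
  - assert (C (- c ^ 2) < c) by (rewrite <- HC6; apply Hdec; nra).
    assert (0 < C (- c ^ 2)) by (apply Hpos; nra).
    cbv beta. nra.
  - intros x Hx. apply is_derive_sq_plus_id, Hder. nra.
  - intros x Hx Hx0.
    destruct (parabola_crossing m g z x (C x) Hm Hg (conj (proj1 Hz) Hz25))
      as [HG HGF]; [nra | nra | lra |].
    assert (0 < - (2 * C x * Ff m g z x (C x) + Gf m g z x (C x)) / Gf m g z x (C x))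
      by (apply Rdiv_lt_0_compat; lra).
    replace (2 * C x * (Ff m g z x (C x) / Gf m g z x (C x)) + 1)
      with (- (- (2 * C x * Ff m g z x (C x) + Gf m g z x (C x)) / Gf m g z x (C x)))
      by (field; lra).
    lra.
Qed.

Lemma right_continuation_lt_sqrt (V : R) : V6 g z <= V < 0 -> C V < sqrt (- V).
Proof.
  destruct HC as [[HC6 _] [Hpos [Hdec _]]].
  rewrite V6_eq in HC6, Hpos, Hdec |- *.
  destruct (C6_bounds g z Hg Hz) as [Hc _].
  intros HV. destruct (Rlt_le_dec V (- C6 g z ^ 2)) as [Hlt | Hge].
  - assert (C V <= C6 g z).
    { rewrite <- HC6. destruct (Req_dec V (C6 g z - 1)) as [-> | Hne]; [lra |].
      left. apply Hdec; lra. }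
    assert (C6 g z < sqrt (- V)) by (apply lt_sqrt_of_sq_lt; lra).
    lra.
  - apply lt_sqrt_of_sq_lt; [apply Rlt_le, Hpos; lra |].
    pose proof (right_continuation_sq_plus_id_lt0 V (conj Hge (proj2 HV))). lra.
Qed.

End RightContinuation.

Theorem mainTheorem17 (m : nat) (g z : R) (C : R -> R) :
  (m = 1%nat \/ m = 2%nat) ->
  1 < g <= 2 ->
  zg m g < z <= zM g ->
  right_continuation m g z C ->
  (forall V, V6 g z <= V < 0 -> C V < sqrt (- V)) /\
  filterlim C (at_left 0) (locally 0).
Proof.
  intros Hm Hg [Hzg HzM] HC.
  assert (Hz : 0 < z <= zM g) by (pose proof (zg_nonneg m g Hm Hg); lra).
  pose proof (right_continuation_lt_sqrt m g z C Hm Hg Hz HC) as Hbelow.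
  split; [exact Hbelow |].
  destruct HC as [_ [Hpos _]].
  apply (filterlim_at_left0_of_sqrt_bound C (- V6 g z)).
  - rewrite V6_eq. pose proof (C6_bounds g z Hg Hz). lra.
  - intros V HV. split; apply Rlt_le; [apply Hpos | apply Hbelow]; lra.
Qed.
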